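(* Let $\{Z_n\}_{n\in\mathbb{N}}$ be a sequence of diagonal matrices $Z_n=\mathrm{diag}(z_1^{(n)},\ldots,z_n^{(n)})$ with $z_j^{(n)}\geq 1$ having bounded squeezing of degree $\zeta\ge0$, such that $\lambda(n)=\frac{1}{2n}\sum_{j=1}^n (z_j^{(n)}+1/z_j^{(n)})$ is uniformly bounded in $n$, and let $\{k_n\}$ be a sequence of subsystem sizes bounded of degree $\kappa\ge0$; write $k=k_n$. Define $f:U(n)\to\mathbb{R}$ by $f(U)=\mathrm{tr}\Big[\big((J_kM_{n,k}(U))^2+\lambda(n)^2I_{2k}\big)^2\Big]$. Equip $U(n)$ with the Hilbert–Schmidt distance $d(U,V)=\|U-V\|_2=\sqrt{\mathrm{tr}((U-V)^*(U-V))}$. Then the Lipschitz constant of $f$ is upper bounded by $Cn^{4\zeta+\kappa/2}$, where $C>0$ is a constant.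
   Context: $J_k=\begin{pmatrix}0_k&-I_k\\ I_k&0_k\end{pmatrix}$. For $U\in U(n)$, $\eta(U)=\begin{pmatrix}\mathrm{Re}(U)&\mathrm{Im}(U)\\ -\mathrm{Im}(U)&\mathrm{Re}(U)\end{pmatrix}$, $M_n(U)=\eta(U)(Z_n\oplus Z_n^{-1})\eta(U)^T$, and $M_{n,k}(U)$ is the $2k\times2k$ submatrix of $M_n(U)$ with rows and columns indexed by $\{1,\ldots,k\}\cup\{n+1,\ldots,n+k\}$. Bounded squeezing of degree $\zeta$: there is $C>0$ with $\|Z_n\|_\infty\le Cn^\zeta$ for all large $n$. Subsystem sizes $k_n\in\{1,\ldots,n\}$ bounded of degree $\kappa$: there is $K>0$ with $k_n\le Kn^\kappa$ for all large $n$. *)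

From HB Require Import structures.
From mathcomp Require Import all_boot all_order all_algebra.
From mathcomp Require Import all_classical all_reals all_analysis.
From mathcomp Require Import complex.
Set Implicit Arguments. Unset Strict Implicit. Unset Printing Implicit Defensive.
Import Order.TTheory GRing.Theory Num.Theory.
Local Open Scope ring_scope.

Section Defs.
Variable R : realType.
Local Notation C := (complex R).

Definition Jmx (k : nat) : 'M[R]_(k + k) :=
  block_mx 0 (- 1%:M) 1%:M 0.

Definition unitary (n : nat) (U : 'M[C]_n) : Prop :=
  U *m (map_mx (@conjc R) U)^T = 1%:M.

Definition eta (n : nat) (U : 'M[C]_n) : 'M[R]_(n + n) :=
  block_mx (map_mx (@complex.Re R) U) (map_mx (@complex.Im R) U)
           (- map_mx (@complex.Im R) U) (map_mx (@complex.Re R) U).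

Definition Zdiag (n : nat) (z : 'I_n -> R) : 'M[R]_n := diag_mx (\row_j z j).

Definition Zsum (n : nat) (z : 'I_n -> R) : 'M[R]_(n + n) :=
  block_mx (Zdiag z) 0 0 (invmx (Zdiag z)).

Definition Mn (n : nat) (z : 'I_n -> R) (U : 'M[C]_n) : 'M[R]_(n + n) :=
  eta U *m Zsum z *m (eta U)^T.

(* entry of a square matrix at nat-indices (0 outside the range) *)
Definition mget (m : nat) (A : 'M[R]_m) (a b : nat) : R :=
  match @insub _ (fun i => i < m)%N 'I_m a, @insub _ (fun i => i < m)%N 'I_m b with
  | Some i, Some j => A i j
  | _, _ => 0
  end.

(* 0-based index map 'I_(k+k) -> rows {0..k-1} U {n..n+k-1} of a 2n x 2n matrix,
   i.e. the 1-based rows {1..k} U {n+1..n+k} in increasing order *)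
Definition subidx (n k : nat) (i : 'I_(k + k)) : nat :=
  if (i < k)%N then val i else (n + (val i - k))%N.

Definition Mnk (n : nat) (z : 'I_n -> R) (k : nat) (U : 'M[C]_n) : 'M[R]_(k + k) :=
  \matrix_(i, j) mget (Mn z U) (@subidx n k i) (@subidx n k j).

Definition lambda (n : nat) (z : 'I_n -> R) : R :=
  (2 * n%:R)^-1 * \sum_(j < n) (z j + (z j)^-1).

Definition fU (n : nat) (z : 'I_n -> R) (k : nat) (U : 'M[C]_n) : R :=
  let A := Jmx k *m Mnk z k U in
  let B := A *m A + (lambda z ^+ 2)%:M in
  \tr (B *m B).

(* Hilbert-Schmidt distance ||U - V||_2 = sqrt(tr((U-V)^*(U-V))) = sqrt(sum_{ij} |U_ij - V_ij|^2) *)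
Definition hsdist (n : nat) (U V : 'M[C]_n) : R :=
  Num.sqrt (\sum_(i < n) \sum_(j < n)
     ((complex.Re (U i j - V i j)) ^+ 2 + (complex.Im (U i j - V i j)) ^+ 2)).

End Defs.
Arguments subidx n k i : clear implicits.

From Pilot Require Import Defs.
From HB Require Import structures.
From mathcomp Require Import all_boot all_order all_algebra.
From mathcomp Require Import all_classical all_reals all_analysis.
From mathcomp Require Import complex.
From mathcomp Require Import ring lra zify.
Set Implicit Arguments. Unset Strict Implicit. Unset Printing Implicit Defensive.
Import Order.TTheory GRing.Theory Num.Theory.
Local Open Scope ring_scope.

(** Write [A_U = J_k M_{n,k}(U)], so that
    [f(U) = tr A_U^4 + 2 lambda^2 tr A_U^2 + 2k lambda^4].  Since [eta(U)] is
    orthogonal for unitary [U] and [M_{n,k}(U)] is a compression of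
    [eta(U) (Z + Z^-1) eta(U)^T], the operator norm of [A_U] is at most
    [s = max_j max(z_j, 1/z_j)], and
    [||A_U - A_V||_F <= 2 s ||eta(U) - eta(V)||_F = 2 sqrt 2 s ||U - V||_2].
    Telescoping [tr A^4 - tr B^4] into four traces [tr (P (A - B))], with [P]
    a product of three factors [A] or [B], and Cauchy-Schwarz for the trace
    pairing give [|f(U) - f(V)| <= 8 s^3 sqrt(2k) ||A_U - A_V||_F
    <= 32 s^4 sqrt k ||U - V||_2]; finally [s = O(n^zeta)] and
    [sqrt k = O(n^(kappa/2))]. *)

Section TraceIdentities.
Variables (R : comPzRingType) (m : nat).
Implicit Types A B : 'M[R]_m.

Lemma mxtrace_sqr_telescope A B :
  \tr (A *m A) - \tr (B *m B) = \tr (A *m (A - B)) + \tr (B *m (A - B)).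
Proof. by rewrite !mulmxBr !raddfB /= [\tr (A *m B)]mxtrace_mulC; ring. Qed.

Lemma mxtrace_pow4_telescope A B :
  \tr (A *m A *m A *m A) - \tr (B *m B *m B *m B) =
  \tr (A *m A *m A *m (A - B)) + \tr (B *m A *m A *m (A - B))
  + \tr (B *m B *m A *m (A - B)) + \tr (B *m B *m B *m (A - B)).
Proof.
have cyc X Y Z : \tr (X *m Y *m Z *m B) = \tr (B *m X *m Y *m Z).
  by rewrite mxtrace_mulC !mulmxA.
by rewrite !mulmxBr !raddfB /= !cyc; ring.
Qed.

End TraceIdentities.

Section Selection.
Variables (R : pzRingType) (m m' : nat) (f : 'I_m' -> 'I_m).

Lemma mxsub_selE n (g : 'I_m' -> 'I_n) (A : 'M[R]_(m, n)) :
  mxsub f g A = rowsub f 1%:M *m A *m (rowsub g 1%:M)^T.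
Proof.
by rewrite -rowsubE trmx_mxsub trmx1 mulmx_colsub mulmx1 mxsubcr.
Qed.

Lemma rowsub1_coisometry : injective f ->
  rowsub f 1%:M *m (rowsub f 1%:M)^T = 1%:M :> 'M[R]_m'.
Proof.
move=> f_inj; rewrite -[X in X *m _]mulmx1 -mxsub_selE.
by apply/matrixP => i j; rewrite !mxE (inj_eq f_inj).
Qed.

End Selection.

Lemma sqr_sum_mul_le (R : realDomainType) (I : finType) (a b : I -> R) :
  (\sum_i a i * b i) ^+ 2 <= (\sum_i a i ^+ 2) * (\sum_i b i ^+ 2).
Proof.
set Sa := \sum_i a i ^+ 2; set Sb := \sum_i b i ^+ 2; set Sab := \sum_i a i * b i.
have prod_sum (F G : I -> R) : (\sum_i F i) * (\sum_j G j) = \sum_i \sum_j F i * G j.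
  by rewrite mulr_suml; apply: eq_bigr => i _; rewrite mulr_sumr.
have lagrange : \sum_i \sum_j (a i * b j - a j * b i) ^+ 2 =
    \sum_i \sum_j a i ^+ 2 * b j ^+ 2 + \sum_i \sum_j a j ^+ 2 * b i ^+ 2
    - 2 * \sum_i \sum_j a i * b i * (a j * b j).
  rewrite mulr_sumr -big_split -sumrB /=; apply: eq_bigr => i _.
  by rewrite mulr_sumr -big_split -sumrB /=; apply: eq_bigr => j _; ring.
rewrite [X in _ + X - _]exchange_big -!prod_sum -expr2 -/Sa -/Sb -/Sab in lagrange.
have : 0 <= \sum_i \sum_j (a i * b j - a j * b i) ^+ 2.
  by apply: sumr_ge0 => i _; apply: sumr_ge0 => j _; exact: sqr_ge0.
rewrite lagrange; lra.
Qed.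

Section Frobenius.
Variable R : rcfType.

Definition frob m n (A : 'M[R]_(m, n)) : R := Num.sqrt (\sum_i \sum_j A i j ^+ 2).

Lemma frob_ge0 m n (A : 'M[R]_(m, n)) : 0 <= frob A.
Proof. exact: sqrtr_ge0. Qed.

Lemma sqr_frob m n (A : 'M[R]_(m, n)) : frob A ^+ 2 = \sum_i \sum_j A i j ^+ 2.
Proof.
by rewrite sqr_sqrtr // sumr_ge0 // => i _; rewrite sumr_ge0 // => j _; exact: sqr_ge0.
Qed.

Lemma sqr_frob_mxtrace m n (A : 'M[R]_(m, n)) : frob A ^+ 2 = \tr (A *m A^T).
Proof.
rewrite sqr_frob; apply: eq_bigr => i _; rewrite mxE.
by apply: eq_bigr => j _; rewrite mxE expr2.
Qed.

Lemma frobE m n (A : 'M[R]_(m, n)) : frob A = Num.sqrt (\tr (A *m A^T)).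
Proof. by rewrite -sqr_frob_mxtrace sqrtr_sqr ger0_norm ?frob_ge0. Qed.

Lemma frob_trmx m n (A : 'M[R]_(m, n)) : frob A^T = frob A.
Proof.
rewrite /frob exchange_big; congr Num.sqrt.
by apply: eq_bigr => j _; apply: eq_bigr => i _; rewrite mxE.
Qed.

Lemma frob1 m : frob (1%:M : 'M[R]_m) = Num.sqrt m%:R.
Proof. by rewrite frobE trmx1 mulmx1 mxtrace1. Qed.

Lemma mxtrace_mul_le m n (A : 'M[R]_(m, n)) (B : 'M[R]_(n, m)) :
  `|\tr (A *m B)| <= frob A * frob B.
Proof.
rewrite -[frob B]frob_trmx -ler_sqr ?nnegrE ?mulr_ge0 ?frob_ge0 //.
rewrite real_normK ?num_real // exprMn !sqr_frob !(pair_bigA _ (fun i j => _ ^+ 2)) /=.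
have -> : \tr (A *m B) = \sum_(p : 'I_m * 'I_n) A p.1 p.2 * B^T p.1 p.2.
  rewrite -(pair_bigA _ (fun i j => A i j * B^T i j)) /=.
  by apply: eq_bigr => i _; rewrite mxE; apply: eq_bigr => j _; rewrite mxE.
exact: sqr_sum_mul_le.
Qed.

Lemma ler_frobD m n (A B : 'M[R]_(m, n)) : frob (A + B) <= frob A + frob B.
Proof.
rewrite -ler_sqr ?nnegrE ?addr_ge0 ?frob_ge0 // sqrrD !sqr_frob_mxtrace.
rewrite raddfD /= mulmxDl !mulmxDr !raddfD /= -[\tr (B *m A^T)]mxtrace_tr.
rewrite trmx_mul trmxK.
have := ler_norm (\tr (A *m B^T)); have := mxtrace_mul_le A B^T.
rewrite frob_trmx; lra.
Qed.

Definition opnorm_le m n (A : 'M[R]_(m, n)) (c : R) :=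
  forall p (X : 'M[R]_(n, p)), frob (A *m X) <= c * frob X.

Lemma opnorm_le_mul m n p (A : 'M[R]_(m, n)) (B : 'M[R]_(n, p)) a b :
  0 <= a -> opnorm_le A a -> opnorm_le B b -> opnorm_le (A *m B) (a * b).
Proof.
move=> a_ge0 hA hB q X; rewrite -mulmxA -mulrA.
by apply: le_trans (hA _ _) _; rewrite ler_wpM2l.
Qed.

Lemma frob_isometry m n p (Q : 'M[R]_(m, n)) (X : 'M[R]_(n, p)) :
  Q^T *m Q = 1%:M -> frob (Q *m X) = frob X.
Proof.
move=> QTQ; rewrite !frobE trmx_mul mxtrace_mulC -!mulmxA.
by rewrite [Q^T *m _]mulmxA QTQ mul1mx mxtrace_mulC.
Qed.

Lemma opnorm_le_isometry m n (Q : 'M[R]_(m, n)) : Q^T *m Q = 1%:M -> opnorm_le Q 1.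
Proof. by move=> QTQ p X; rewrite frob_isometry // mul1r. Qed.

Lemma opnorm_le_coisometry m n (Q : 'M[R]_(m, n)) : Q *m Q^T = 1%:M -> opnorm_le Q 1.
Proof.
move=> QQT p X; rewrite mul1r.
(* [|QX|^2 = tr (X^T (Q^T Q X)) <= |X| |Q^T Q X| = |X| |QX|], as [Q^T] is an isometry. *)
have QTQX : frob (Q^T *m (Q *m X)) = frob (Q *m X) by rewrite frob_isometry ?trmxK.
have : frob (Q *m X) ^+ 2 <= frob X * frob (Q *m X).
  rewrite sqr_frob_mxtrace mxtrace_mulC trmx_mul -!mulmxA -QTQX -[frob X]frob_trmx.
  exact: le_trans (ler_norm _) (mxtrace_mul_le _ _).
have := frob_ge0 (Q *m X); have := frob_ge0 X; nra.
Qed.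

Lemma opnorm_le_diag n (d : 'rV[R]_n) c :
  0 <= c -> (forall i, `|d 0 i| <= c) -> opnorm_le (diag_mx d) c.
Proof.
move=> c_ge0 d_le p X.
rewrite -ler_sqr ?nnegrE ?mulr_ge0 ?frob_ge0 // exprMn !sqr_frob mul_diag_mx mulr_sumr.
apply: ler_sum => i _; rewrite mulr_sumr; apply: ler_sum => j _.
rewrite mxE exprMn ler_wpM2r ?sqr_ge0 // -real_normK ?num_real //.
by rewrite !expr2 ler_pM ?normr_ge0 ?d_le.
Qed.

Lemma frob_mulmxr_le m n p (X : 'M[R]_(m, n)) (A : 'M[R]_(n, p)) c :
  opnorm_le A^T c -> frob (X *m A) <= c * frob X.
Proof. by move=> hA; rewrite -frob_trmx trmx_mul -[frob X]frob_trmx hA. Qed.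

Lemma frob_le_opnorm m (A : 'M[R]_m) c : opnorm_le A c -> frob A <= c * Num.sqrt m%:R.
Proof. by move=> hA; rewrite -frob1 -[A]mulmx1 hA. Qed.

Lemma mxtrace_mul_le_opnorm m (E D : 'M[R]_m) e :
  0 <= e -> opnorm_le E e -> `|\tr (E *m D)| <= e * Num.sqrt m%:R * frob D.
Proof.
move=> e_ge0 hE; apply: le_trans (mxtrace_mul_le _ _) _.
by rewrite ler_wpM2r ?frob_ge0 ?frob_le_opnorm.
Qed.

Section TraceLipschitz.
Variables (m : nat) (A B : 'M[R]_m) (c : R).
Hypotheses (c_ge0 : 0 <= c) (hA : opnorm_le A c) (hB : opnorm_le B c).

Lemma mxtrace_sqr_lipschitz :
  `|\tr (A *m A) - \tr (B *m B)| <= 2 * c * Num.sqrt m%:R * frob (A - B).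
Proof.
rewrite mxtrace_sqr_telescope; apply: le_trans (ler_normD _ _) _.
have := mxtrace_mul_le_opnorm (A - B) c_ge0 hA.
have := mxtrace_mul_le_opnorm (A - B) c_ge0 hB.
lra.
Qed.

Lemma mxtrace_pow4_lipschitz :
  `|\tr (A *m A *m A *m A) - \tr (B *m B *m B *m B)|
    <= 4 * c ^+ 3 * Num.sqrt m%:R * frob (A - B).
Proof.
have op3 (X Y Z : 'M[R]_m) : opnorm_le X c -> opnorm_le Y c -> opnorm_le Z c ->
    `|\tr (X *m Y *m Z *m (A - B))| <= c ^+ 3 * Num.sqrt m%:R * frob (A - B).
  move=> hX hY hZ; apply: mxtrace_mul_le_opnorm; first exact: exprn_ge0.
  rewrite exprSr expr2.
  by apply: opnorm_le_mul; rewrite ?mulr_ge0 //; exact: opnorm_le_mul.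
rewrite mxtrace_pow4_telescope.
have := op3 _ _ _ hA hA hA; have := op3 _ _ _ hB hA hA.
have := op3 _ _ _ hB hB hA; have := op3 _ _ _ hB hB hB.
set x1 := \tr (A *m A *m A *m _); set x2 := \tr (B *m A *m A *m _).
set x3 := \tr (B *m B *m A *m _); set x4 := \tr (B *m B *m B *m _).
have := ler_normD (x1 + x2 + x3) x4; have := ler_normD (x1 + x2) x3.
have := ler_normD x1 x2; lra.
Qed.

End TraceLipschitz.
End Frobenius.

Section SubsystemSelection.
Variables (n k : nat).
Hypothesis k_le_n : (k <= n)%N.

Lemma subidx_lt (i : 'I_(k + k)) : (subidx n k i < n + n)%N.
Proof. by case: i => i lt_i; rewrite /subidx /=; case: ifP => _; lia. Qed.

Definition subord (i : 'I_(k + k)) : 'I_(n + n) := Ordinal (subidx_lt i).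

Lemma subord_inj : injective subord.
Proof.
move=> [i lt_i] [j lt_j] /(congr1 val); rewrite /= /subidx /= => eq_ij.
by apply: val_inj => /=; move: eq_ij; do 2!case: ifP => ?; lia.
Qed.

Lemma Mnk_mxsub (R : realType) (z : 'I_n -> R) (U : 'M[R[i]]_n) :
  Mnk z k U = mxsub subord subord (Mn z U).
Proof.
apply/matrixP => i j; rewrite [LHS]mxE [RHS]mxE /mget.
by rewrite !(insubT (fun a => a < n + n)%N (subidx_lt _)).
Qed.

End SubsystemSelection.

Section RealForm.
Variable R : realType.
Local Notation Re_mx W := (map_mx (@complex.Re R) W).
Local Notation Im_mx W := (map_mx (@complex.Im R) W).

Lemma eta_sub n (U V : 'M[R[i]]_n) : Defs.eta U - Defs.eta V = Defs.eta (U - V).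
Proof.
rewrite /Defs.eta opp_block_mx add_block_mx.
congr block_mx; apply/matrixP => i j; rewrite !mxE.
all: by case: (U i j) => ? ?; case: (V i j) => ? ? /=; ring.
Qed.

Lemma mulmx_eta_tr n (W : 'M[R[i]]_n) :
  Defs.eta W *m (Defs.eta W)^T =
  block_mx (Re_mx W *m (Re_mx W)^T + Im_mx W *m (Im_mx W)^T)
           (Im_mx W *m (Re_mx W)^T - Re_mx W *m (Im_mx W)^T)
           (- (Im_mx W *m (Re_mx W)^T - Re_mx W *m (Im_mx W)^T))
           (Re_mx W *m (Re_mx W)^T + Im_mx W *m (Im_mx W)^T).
Proof.
rewrite /Defs.eta tr_block_mx mulmx_block !linearN /= !mulNmx opprK.
by congr block_mx; rewrite ?opprB addrC.
Qed.

Lemma Re_Im_mul_adj n (W : 'M[R[i]]_n) :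
  Re_mx (W *m (map_mx conjc W)^T) = Re_mx W *m (Re_mx W)^T + Im_mx W *m (Im_mx W)^T /\
  Im_mx (W *m (map_mx conjc W)^T) = Im_mx W *m (Re_mx W)^T - Re_mx W *m (Im_mx W)^T.
Proof.
have ReD : {morph @complex.Re R : x y / x + y} by case=> ? ? [? ?].
have ImD : {morph @complex.Im R : x y / x + y} by case=> ? ? [? ?].
split; apply/matrixP => i j; rewrite !mxE.
  rewrite (big_morph _ ReD (erefl _)) -big_split; apply: eq_bigr => l _; rewrite !mxE.
  by case: (W i l) => ? ?; case: (W j l) => ? ? /=; ring.
rewrite (big_morph _ ImD (erefl _)) -sumrB; apply: eq_bigr => l _; rewrite !mxE.
by case: (W i l) => ? ?; case: (W j l) => ? ? /=; ring.
Qed.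

Lemma eta_orthogonal n (U : 'M[R[i]]_n) :
  unitary U -> Defs.eta U *m (Defs.eta U)^T = 1%:M.
Proof.
move=> U_unitary; have [ReU ImU] := Re_Im_mul_adj U; rewrite U_unitary in ReU ImU.
rewrite mulmx_eta_tr -ReU -ImU scalar_mx_block.
have [-> ->] : Re_mx (1%:M : 'M[R[i]]_n) = 1%:M /\ Im_mx (1%:M : 'M[R[i]]_n) = 0.
  by split; apply/matrixP => i j; rewrite !mxE; case: eqP.
by rewrite oppr0.
Qed.

Lemma frob_eta_sub n (U V : 'M[R[i]]_n) :
  frob (Defs.eta U - Defs.eta V) = Num.sqrt 2 * hsdist U V.
Proof.
have -> : hsdist U V = Num.sqrt (frob (Re_mx (U - V)) ^+ 2 + frob (Im_mx (U - V)) ^+ 2).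
  rewrite !sqr_frob -big_split; congr Num.sqrt; apply: eq_bigr => i _.
  by rewrite -big_split; apply: eq_bigr => j _; rewrite !mxE.
rewrite eta_sub frobE mulmx_eta_tr mxtrace_block raddfD /= -!sqr_frob_mxtrace.
by rewrite -mulr2n -[_ *+ 2]mulr_natl sqrtrM.
Qed.

Lemma Jmx_orthogonal k : Jmx R k *m (Jmx R k)^T = 1%:M.
Proof.
rewrite /Jmx tr_block_mx mulmx_block scalar_mx_block !trmx0 linearN /= trmx1.
by rewrite !mul0mx !mulmx0 !addr0 !add0r mulNmx !mul1mx opprK.
Qed.

End RealForm.

Section Lipschitz.
Variables (R : realType) (n k : nat) (z : 'I_n -> R) (s : R).
Hypotheses (k_le_n : (k <= n)%N) (s_ge0 : 0 <= s).
Hypotheses (z_gt0 : forall j, 0 < z j) (z_le : forall j, z j <= s).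
Hypothesis zV_le : forall j, (z j)^-1 <= s.

Local Notation P := (rowsub (subord k_le_n) 1%:M : 'M[R]_(k + k, n + n)).
Local Notation A U := (Jmx R k *m Mnk z k U).

Lemma Zsum_diag : Zsum z = diag_mx (row_mx (\row_j z j) (\row_j (z j)^-1)).
Proof.
rewrite /Zsum diag_mx_row; congr block_mx.
have ZZV : Zdiag z *m diag_mx (\row_j (z j)^-1) = 1%:M.
  rewrite /Zdiag mulmx_diag -diag_const_mx; congr diag_mx.
  by apply/rowP => j; rewrite !mxE divff ?gt_eqF.
have [Z_unit _] := mulmx1_unit ZZV.
by rewrite -[RHS](mulKmx Z_unit) ZZV mulmx1.
Qed.

Lemma Zsum_tr : (Zsum z)^T = Zsum z.
Proof. by rewrite Zsum_diag tr_diag_mx. Qed.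

Lemma opnorm_Zsum : opnorm_le (Zsum z) s.
Proof.
rewrite Zsum_diag; apply: opnorm_le_diag => // i; rewrite mxE.
case: splitP => j _; rewrite mxE ger0_norm //; first exact/ltW.
by rewrite invr_ge0; exact/ltW.
Qed.

Lemma opnorm_Mn U : unitary U -> opnorm_le (Mn z U) s.
Proof.
move=> U_unitary; have ηηT := eta_orthogonal U_unitary.
rewrite -[s]mulr1 -[s]mul1r; apply: opnorm_le_mul; rewrite ?mulr_ge0 //.
  exact: opnorm_le_mul (opnorm_le_coisometry ηηT) opnorm_Zsum.
by apply: opnorm_le_isometry; rewrite trmxK.
Qed.

Lemma opnorm_JMnk U : unitary U -> opnorm_le (A U) s.
Proof.
move=> U_unitary; rewrite Mnk_mxsub mxsub_selE.
have PPT : P *m P^T = 1%:M by exact/rowsub1_coisometry/subord_inj.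
rewrite -[s]mul1r; apply: opnorm_le_mul => //.
  exact/opnorm_le_coisometry/Jmx_orthogonal.
rewrite -[s]mulr1 -[s]mul1r; apply: opnorm_le_mul; rewrite ?mulr_ge0 //.
  exact: opnorm_le_mul (opnorm_le_coisometry PPT) (opnorm_Mn U_unitary).
by apply: opnorm_le_isometry; rewrite trmxK.
Qed.

Lemma frob_Mn_sub U V : unitary U -> unitary V ->
  frob (Mn z U - Mn z V) <= 2 * s * frob (Defs.eta U - Defs.eta V).
Proof.
move=> U_unitary V_unitary; set D := Defs.eta U - Defs.eta V.
have -> : Mn z U - Mn z V =
    D *m Zsum z *m (Defs.eta U)^T + Defs.eta V *m (Zsum z *m D^T).
  by rewrite /Mn mulmxA linearB /= mulmxBr !mulmxBl addrA subrK.
apply: le_trans (ler_frobD _ _) _; rewrite mulr2n mulrDl mul1r mulrDl; apply: lerD.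
  apply: le_trans (frob_mulmxr_le _ _) _.
    by rewrite trmxK; exact/opnorm_le_coisometry/eta_orthogonal.
  by rewrite mul1r; apply: frob_mulmxr_le; rewrite Zsum_tr; exact: opnorm_Zsum.
apply: le_trans (opnorm_le_coisometry (eta_orthogonal V_unitary) _) _.
by rewrite mul1r -[frob D]frob_trmx; exact: opnorm_Zsum.
Qed.

Lemma frob_JMnk_sub U V : unitary U -> unitary V ->
  frob (A U - A V) <= 2 * s * frob (Defs.eta U - Defs.eta V).
Proof.
move=> U_unitary V_unitary; rewrite -mulmxBr !Mnk_mxsub -linearB /= mxsub_selE.
apply: le_trans (opnorm_le_coisometry (Jmx_orthogonal R k) _) _; rewrite mul1r.
have PPT : P *m P^T = 1%:M by exact/rowsub1_coisometry/subord_inj.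
apply: le_trans (frob_mulmxr_le _ _) _.
  by rewrite trmxK; exact: opnorm_le_coisometry.
rewrite mul1r; apply: le_trans (opnorm_le_coisometry PPT _) _.
by rewrite mul1r frob_Mn_sub.
Qed.

Lemma lambda_bound : 0 <= lambda z <= s.
Proof.
have zzV_ge0 j : 0 <= z j + (z j)^-1 by rewrite addr_ge0 ?invr_ge0 ?ltW.
apply/andP; split; first by rewrite mulr_ge0 ?invr_ge0 ?sumr_ge0.
apply: (@le_trans _ _ ((2 * n%:R)^-1 * (2 * n%:R * s))).
  have -> : 2 * n%:R * s = \sum_(j < n) (s + s).
    by rewrite sumr_const card_ord -mulr_natl; ring.
  by rewrite ler_wpM2l ?invr_ge0 // ler_sum // => j _; rewrite lerD.
have [->|n2_neq0] := eqVneq (2 * n%:R : R) 0; first by rewrite invr0 mul0r.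
by rewrite mulKf.
Qed.

Lemma fU_expand U :
  fU z k U = \tr (A U *m A U *m A U *m A U) + 2 * lambda z ^+ 2 * \tr (A U *m A U)
             + lambda z ^+ 4 * (k + k)%:R.
Proof.
rewrite /fU mulmxDl !mulmxDr mul_mx_scalar !mul_scalar_mx scale_scalar_mx !raddfD /=.
by rewrite !mxtraceZ mxtrace_scalar !mulmxA -mulr_natr; ring.
Qed.

Lemma fU_sub_le U V : unitary U -> unitary V ->
  `|fU z k U - fU z k V| <= 8 * s ^+ 3 * Num.sqrt (k + k)%:R * frob (A U - A V).
Proof.
move=> U_unitary V_unitary; rewrite !fU_expand.
have := mxtrace_pow4_lipschitz s_ge0 (opnorm_JMnk U_unitary) (opnorm_JMnk V_unitary).
have := mxtrace_sqr_lipschitz s_ge0 (opnorm_JMnk U_unitary) (opnorm_JMnk V_unitary).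
set x4 := \tr (A U *m A U *m A U *m A U) - \tr (A V *m A V *m A V *m A V).
set x2 := \tr (A U *m A U) - \tr (A V *m A V) => x2_le x4_le.
have /andP[l_ge0 l_le] := lambda_bound.
have l2_le : lambda z ^+ 2 <= s ^+ 2 by rewrite ler_sqr ?nnegrE.
have regroup (a4 b4 a2 b2 l c : R) :
  a4 + 2 * l * a2 + c - (b4 + 2 * l * b2 + c) = (a4 - b4) + 2 * l * (a2 - b2) by ring.
rewrite regroup -/x4 -/x2.
apply: le_trans (ler_normD _ _) _.
rewrite normrM (ger0_norm (mulr_ge0 (ler0n R 2) (sqr_ge0 (lambda z)))).
have := ler_pM (sqr_ge0 _) (normr_ge0 _) l2_le x2_le.
have := frob_ge0 (A U - A V); have := sqrtr_ge0 (k + k)%:R.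
nra.
Qed.

Lemma fU_lipschitz U V : unitary U -> unitary V ->
  `|fU z k U - fU z k V| <= 32 * s ^+ 4 * Num.sqrt k%:R * hsdist U V.
Proof.
move=> U_unitary V_unitary; apply: le_trans (fU_sub_le U_unitary V_unitary) _.
have := frob_JMnk_sub U_unitary V_unitary; rewrite frob_eta_sub => A_sub_le.
have sqrt_2k : Num.sqrt (k + k)%:R * Num.sqrt 2 = 2 * Num.sqrt k%:R :> R.
  rewrite -sqrtrM // (_ : _ * 2 = 2 ^+ 2 * k%:R); last by rewrite natrD; ring.
  by rewrite sqrtrM ?sqr_ge0 // sqrtr_sqr ger0_norm.
have c_ge0 : 0 <= 8 * s ^+ 3 * Num.sqrt (k + k)%:R.
  by rewrite !mulr_ge0 ?exprn_ge0 ?sqrtr_ge0.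
apply: le_trans (ler_wpM2l c_ge0 A_sub_le) _.
rewrite [X in X <= _](_ : _ =
    16 * s ^+ 4 * (Num.sqrt (k + k)%:R * Num.sqrt 2) * hsdist U V).
  by rewrite sqrt_2k; lra.
ring.
Qed.

End Lipschitz.

Section PowerBounds.
Variable R : realType.

Lemma powR_ge1 (x a : R) : 1 <= x -> 0 <= a -> 1 <= x `^ a.
Proof. by move=> x_ge1 a_ge0; rewrite -(powRr0 x) ler_powR. Qed.

Lemma exprn_powR (x a : R) m : 0 <= x -> (x `^ a) ^+ m = x `^ (m%:R * a).
Proof. by move=> x_ge0; rewrite -powR_mulrn ?powR_ge0 // -powRrM mulrC. Qed.

Lemma sqrt_powR (x a : R) : 0 <= x -> Num.sqrt (x `^ a) = x `^ (a / 2).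
Proof. by move=> x_ge0; rewrite -powR12_sqrt ?powR_ge0 // -powRrM. Qed.

Lemma powR_bound_uniform (f : nat -> R) (a C : R) (N : nat) : 0 <= a ->
  (forall n, (N <= n)%N -> f n <= C * n%:R `^ a) ->
  exists2 S, 1 <= S & forall n, (0 < n)%N -> f n <= S * n%:R `^ a.
Proof.
move=> a_ge0 f_le; set T := \sum_(m < N) `|f m|.
have T_ge0 : 0 <= T by rewrite sumr_ge0.
exists (1 + `|C| + T) => [|n n_gt0]; first by have := normr_ge0 C; lra.
have p_ge1 : 1 <= n%:R `^ a by rewrite powR_ge1 ?ler1n.
have [le_Nn | lt_nN] := leqP N n.
  apply: le_trans (f_le n le_Nn) _; rewrite ler_wpM2r ?powR_ge0 //.
  by have := ler_norm C; lra.
have fn_le : f n <= T.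
  rewrite /T (bigD1 (Ordinal lt_nN)) //= -[X in X <= _]addr0.
  by apply: lerD; [exact: ler_norm | exact: sumr_ge0].
by have := normr_ge0 C; nra.
Qed.

End PowerBounds.

Theorem lemma4 (R : realType) (z : forall n : nat, 'I_n -> R) (k : nat -> nat)
    (zeta kappa : R) :
  (forall (n : nat) (j : 'I_n), 1 <= z n j) ->
  0 <= zeta ->
  (* bounded squeezing of degree zeta: ||Z_n||_oo = max_j z_j^(n) <= C n^zeta *)
  (exists C : R, 0 < C /\ exists N : nat, forall n : nat, (N <= n)%N ->
      forall j : 'I_n, z n j <= C * (n%:R `^ zeta)) ->
  (* lambda(n) uniformly bounded *)
  (exists L : R, forall n : nat, (0 < n)%N -> lambda (z n) <= L) ->
  (* subsystem sizes k_n in {1, ..., n} *)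
  (forall n : nat, (0 < n)%N -> (0 < k n)%N && (k n <= n)%N) ->
  0 <= kappa ->
  (* bounded of degree kappa *)
  (exists K : R, 0 < K /\ exists N : nat, forall n : nat, (N <= n)%N ->
      (k n)%:R <= K * (n%:R `^ kappa)) ->
  exists C : R, 0 < C /\
    forall n : nat, (0 < n)%N ->
      forall U V : 'M[complex R]_n, unitary U -> unitary V ->
        `| fU (z n) (k n) U - fU (z n) (k n) V |
          <= C * (n%:R `^ (4 * zeta + kappa / 2)) * hsdist U V.
Proof.
(* lambda(n) <= max_j z_j^(n). *)
move=> z_ge1 zeta_ge0 [C [C_gt0 [N z_le]]] _ k_range kappa_ge0 [K [_ [N' k_le]]].
have [S S_ge1 zmax_le] : exists2 S, 1 <= S & forall n, (0 < n)%N ->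
    \big[Num.max/0]_(j < n) z n j <= S * n%:R `^ zeta.
  apply: (powR_bound_uniform (C := C) (N := N) zeta_ge0) => n le_Nn.
  by apply: bigmax_le => [|j _]; [rewrite mulr_ge0 ?powR_ge0 ?ltW | exact: z_le].
have [S' S'_ge1 k_le_S'] := powR_bound_uniform kappa_ge0 k_le.
exists (32 * S ^+ 4 * Num.sqrt S'); split.
  by rewrite !mulr_gt0 ?exprn_gt0 ?sqrtr_gt0 //; lra.
move=> n n_gt0 U V U_unitary V_unitary; have /andP[_ k_le_n] := k_range n n_gt0.
have p_ge1 : 1 <= n%:R `^ zeta by rewrite powR_ge1 ?ler1n.
set s := S * n%:R `^ zeta; have s_ge1 : 1 <= s by rewrite -[1]mulr1 ler_pM.
have z_gt0 j : 0 < z n j by apply: lt_le_trans (z_ge1 n j).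
have z_le_s j : z n j <= s := le_trans (le_bigmax _ _ j) (zmax_le n n_gt0).
have zV_le_s j : (z n j)^-1 <= s by apply: le_trans s_ge1; rewrite invf_le1.
apply: le_trans (fU_lipschitz k_le_n _ z_gt0 z_le_s zV_le_s U_unitary V_unitary) _.
  exact: le_trans s_ge1.
have sqrt_k_le : Num.sqrt (k n)%:R <= Num.sqrt S' * n%:R `^ (kappa / 2).
  by rewrite -sqrt_powR // -sqrtrM ?ler_sqrt ?k_le_S' ?mulr_ge0 ?powR_ge0 //; lra.
rewrite powRD ?pnatr_eq0 -?lt0n ?n_gt0 ?implybT // /s exprMn exprn_powR //.
rewrite [X in _ <= X](_ : _ = 32 * (S ^+ 4 * n%:R `^ (4 * zeta))
    * (Num.sqrt S' * n%:R `^ (kappa / 2)) * hsdist U V); last by ring.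
by rewrite ler_wpM2r ?sqrtr_ge0 // ler_wpM2l // !mulr_ge0 ?exprn_ge0 ?powR_ge0 //; lra.
Qed.
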